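(* Let $v,u$ be integrable functions on $[0,\infty)$ and let $z_1,z_2,\gamma_1,\gamma_2$ be integrable functions on $[0,\infty)$ such that $$z_1(x)\le v(x)\le z_2(x)\quad\text{and}\quad \gamma_1(x)\le u(x)\le\gamma_2(x)\quad\text{for all }x\in[0,\infty).$$ Then for all $x>0$, $\alpha>0$, $\delta>0$, $\rho>0$ and $\beta,\lambda,\eta,k\in\mathbb{R}$, writing $A f=\,{}^{\rho}\mathcal{J}^{\alpha,\beta}_{\eta,k}f(x)$ and $D f=\,{}^{\rho}\mathcal{J}^{\delta,\lambda}_{\eta,k}f(x)$, the following hold: (a) $Du\,Az_2+D\gamma_1\,Av\ \ge\ D\gamma_1\,Az_2+Du\,Av$; (b) $Dz_1\,Au+A\gamma_2\,Dv\ \ge\ Dz_1\,A\gamma_2+Dv\,Au$; (c) $Az_2\,D\gamma_2+Av\,Du\ \ge\ Az_2\,Du+D\gamma_2\,Av$; (d) $Az_1\,D\gamma_1+Av\,Du\ \ge\ Az_1\,Du+D\gamma_1\,Av$.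
   Context: For a function $f$ on $[0,\infty)$, $x>0$, $\alpha>0$, $\rho>0$ and $\beta,\eta,k\in\mathbb{R}$, the generalized Katugampola fractional integral is $${}^{\rho}\mathcal{J}^{\alpha,\beta}_{\eta,k}f(x)=\frac{\rho^{1-\beta}x^{k}}{\Gamma(\alpha)}\int_0^x\frac{\tau^{\rho(\eta+1)-1}}{(x^\rho-\tau^\rho)^{1-\alpha}}f(\tau)\,d\tau,$$ defined whenever the integral exists; all such integrals appearing are assumed to exist. *)

From HB Require Import structures.
From mathcomp Require Import all_boot all_order all_algebra.
From mathcomp Require Import all_classical all_reals all_analysis.
Set Implicit Arguments. Unset Strict Implicit. Unset Printing Implicit Defensive.
Import Order.TTheory GRing.Theory Num.Theory.
Import numFieldNormedType.Exports.
Local Open Scope classical_set_scope.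
Local Open Scope ring_scope.

Definition Gamma (R : realType) (a : R) : R :=
  Rintegral (@lebesgue_measure R) `]0%R, +oo[
    (fun t => t `^ (a - 1) * expR (- t)).

Definition katu_integrand (R : realType) (rho alpha eta x : R) (f : R -> R)
  (tau : R) : R :=
  tau `^ (rho * (eta + 1) - 1) / (x `^ rho - tau `^ rho) `^ (1 - alpha) * f tau.

Definition katugampola (R : realType) (rho alpha beta eta k : R) (f : R -> R)
  (x : R) : R :=
  rho `^ (1 - beta) * x `^ k / Gamma alpha *
  Rintegral (@lebesgue_measure R) `]0%R, x[ (katu_integrand rho alpha eta x f).

Definition katugampola_exists (R : realType) (rho alpha eta x : R)
  (f : R -> R) : Prop :=
  (@lebesgue_measure R).-integrable `]0%R, x[
    (EFin \o katu_integrand rho alpha eta x f).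

Definition integrable_on_halfline (R : realType) (f : R -> R) : Prop :=
  (@lebesgue_measure R).-integrable `[0%R, +oo[ (EFin \o f).

(* Katugampola fractional integration is monotone: its kernel and its constant
   prefactor are nonnegative.  Each of the four inequalities is the statement
   (b1 - a1) * (b2 - a2) >= 0 for two pairs a1 <= b1, a2 <= b2 of fractional
   integrals of functions ordered pointwise. *)
From HB Require Import structures.
From mathcomp Require Import all_boot all_order all_algebra.
From mathcomp Require Import all_classical all_reals all_analysis.
From mathcomp Require Import ring lra.
Set Implicit Arguments. Unset Strict Implicit. Unset Printing Implicit Defensive.
Import Order.TTheory GRing.Theory Num.Theory.
Local Open Scope ring_scope.

Lemma mulr_rearrange_le (R : numDomainType) (a1 b1 a2 b2 : R) :
  a1 <= b1 -> a2 <= b2 -> a1 * b2 + b1 * a2 <= a1 * a2 + b1 * b2.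
Proof.
move=> le1 le2; rewrite -subr_ge0.
have -> : a1 * a2 + b1 * b2 - (a1 * b2 + b1 * a2) = (b1 - a1) * (b2 - a2).
  by ring.
by apply: mulr_ge0; rewrite subr_ge0.
Qed.

Lemma Gamma_ge0 (R : realType) (a : R) : 0 <= Gamma a.
Proof.
apply: Rintegral_ge0 => t _.
by apply: mulr_ge0; [exact: powR_ge0 | exact: expR_ge0].
Qed.

Lemma katugampola_le (R : realType) (f g : R -> R) (rho a b eta k x : R) :
  (forall t : R, 0 <= t -> f t <= g t) ->
  katugampola_exists rho a eta x f -> katugampola_exists rho a eta x g ->
  katugampola rho a b eta k f x <= katugampola rho a b eta k g x.
Proof.
move=> fg If Ig; rewrite /katugampola; apply: ler_wpM2l.
  by apply: divr_ge0; [apply: mulr_ge0; exact: powR_ge0 | exact: Gamma_ge0].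
apply: le_Rintegral => // t; rewrite /= in_itv /= => /andP[t_gt0 _].
apply: ler_wpM2l; last by apply: fg; exact: ltW.
by apply: divr_ge0; exact: powR_ge0.
Qed.

Theorem theorem4 (R : realType) (v u z1 z2 g1 g2 : R -> R) :
  integrable_on_halfline v -> integrable_on_halfline u ->
  integrable_on_halfline z1 -> integrable_on_halfline z2 ->
  integrable_on_halfline g1 -> integrable_on_halfline g2 ->
  (forall t : R, 0 <= t -> z1 t <= v t <= z2 t) ->
  (forall t : R, 0 <= t -> g1 t <= u t <= g2 t) ->
  forall x alpha delta rho beta lambda eta k : R,
  0 < x -> 0 < alpha -> 0 < delta -> 0 < rho ->
  (* all the fractional integrals appearing exist *)
  (forall f, f \in [:: v; u; z1; z2; g1; g2] ->
     katugampola_exists rho alpha eta x f /\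
     katugampola_exists rho delta eta x f) ->
  let A := fun f => katugampola rho alpha beta eta k f x in
  let D := fun f => katugampola rho delta lambda eta k f x in
  [/\ D u * A z2 + D g1 * A v >= D g1 * A z2 + D u * A v,
      D z1 * A u + A g2 * D v >= D z1 * A g2 + D v * A u,
      A z2 * D g2 + A v * D u >= A z2 * D u + D g2 * A v &
      A z1 * D g1 + A v * D u >= A z1 * D u + D g1 * A v].
Proof.
move=> _ _ _ _ _ _ hv hu x alpha delta rho beta lambda eta k _ _ _ _ hex A D.
set fs := [:: v; u; z1; z2; g1; g2] in hex.
have /hex[Av Dv] : v \in fs by rewrite !inE eqxx ?orbT.
have /hex[Au Du] : u \in fs by rewrite !inE eqxx ?orbT.
have /hex[Az1 Dz1] : z1 \in fs by rewrite !inE eqxx ?orbT.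
have /hex[Az2 Dz2] : z2 \in fs by rewrite !inE eqxx ?orbT.
have /hex[Ag1 Dg1] : g1 \in fs by rewrite !inE eqxx ?orbT.
have /hex[Ag2 Dg2] : g2 \in fs by rewrite !inE eqxx ?orbT.
have z1_le_v t : 0 <= t -> z1 t <= v t by move=> /hv/andP[].
have v_le_z2 t : 0 <= t -> v t <= z2 t by move=> /hv/andP[].
have g1_le_u t : 0 <= t -> g1 t <= u t by move=> /hu/andP[].
have u_le_g2 t : 0 <= t -> u t <= g2 t by move=> /hu/andP[].
have A_le f g : (forall t, 0 <= t -> f t <= g t) ->
    katugampola_exists rho alpha eta x f -> katugampola_exists rho alpha eta x g ->
    A f <= A g by exact: katugampola_le.
have D_le f g : (forall t, 0 <= t -> f t <= g t) ->
    katugampola_exists rho delta eta x f -> katugampola_exists rho delta eta x g ->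
    D f <= D g by exact: katugampola_le.
split.
- have := mulr_rearrange_le (D_le _ _ g1_le_u Dg1 Du) (A_le _ _ v_le_z2 Av Az2).
  lra.
- have := mulr_rearrange_le (A_le _ _ u_le_g2 Au Ag2) (D_le _ _ z1_le_v Dz1 Dv).
  lra.
- have := mulr_rearrange_le (A_le _ _ v_le_z2 Av Az2) (D_le _ _ u_le_g2 Du Dg2).
  lra.
- have := mulr_rearrange_le (A_le _ _ z1_le_v Az1 Av) (D_le _ _ g1_le_u Dg1 Du).
  lra.
Qed.
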